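(* The following system $\mathsf{Q}$ is sound for $\mathcal{Q}(\mathrm{FO})$ and $\mathcal{Q}(\mathrm{QBF})$ (with lax semantics), writing $\varphi\Leftrightarrow\psi$ for $(\varphi\Rightarrow\psi)$ and $(\psi\Rightarrow\varphi)$ combined by the team-level conjunction: (Lin$\forall$) $\forall x\sim\varphi\Leftrightarrow\sim\forall x\varphi$; (F$\exists$) $\exists x\alpha\Leftrightarrow\neg\forall x\neg\alpha$ for classical $\alpha$; (D$\exists\otimes$) $\exists x(\varphi\otimes\psi)\Leftrightarrow\exists x\varphi\otimes\exists x\psi$; (E$\forall$) $\forall x\alpha\Rightarrow\, !x\,\alpha$ for classical $\alpha$; (I$\forall$) $!x\,\psi\Rightarrow\forall x\psi$; (Dis$\forall$) $\forall x(\varphi\Rightarrow\psi)\Rightarrow(\forall x\varphi\Rightarrow\forall x\psi)$; (Dis$!$) $!x(\varphi\Rightarrow\psi)\Rightarrow(!x\varphi\Rightarrow\, !x\psi)$; and the rule: from a theorem $\varphi$ infer $!x\,\varphi$.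
   Context: $\Rightarrow$ is the team-semantic material implication ($A\models\varphi\Rightarrow\psi$ iff $A\not\models\varphi$ or $A\models\psi$), $\sim$ the strong negation, $\otimes$ the splitting disjunction ($\varphi\otimes\psi := \sim(\varphi\multimap\sim\psi)$, i.e. the team splits as $S\cup U$ with $S\models\varphi$, $U\models\psi$). $\mathcal{Q}(\mathcal{L})$ is the closure of $\mathcal{L}$ under $\sim$, $\Rightarrow$, $\multimap$ and team quantifiers $\forall x$, $!x$ (shriek), with $\exists x\varphi:=\sim !x\sim\varphi$. For a structure $\mathcal{A}$ with domain $A$ and team $T$: $(\mathcal{A},T)\models\forall x\varphi$ iff the duplicating team $T[A/x]=\{s^x_a\mid s\in T,a\in A\}$ satisfies $\varphi$; $(\mathcal{A},T)\models\, !x\varphi$ iff $T[f/x]=\{s^x_a\mid s\in T,a\in f(s)\}$ satisfies $\varphi$ for every supplementing function $f:T\to\mathfrak{P}(A)\setminus\{\emptyset\}$ (lax semantics). For $\mathcal{Q}(\mathrm{QBF})$ the domain is $\{0,1\}$. *)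

From Stdlib Require Import List PeanoNat.
Import ListNotations.

Set Implicit Arguments.

Inductive QF (C : Type) : Type :=
| Cl     : C -> QF C
| Neg    : QF C -> QF C              (* strong negation ~ *)
| Imp    : QF C -> QF C -> QF C
| Lolli  : QF C -> QF C -> QF C
| All    : nat -> QF C -> QF C
| Shriek : nat -> QF C -> QF C.

Arguments Cl {C} _.
Arguments Neg {C} _.
Arguments Imp {C} _ _.
Arguments Lolli {C} _ _.
Arguments All {C} _ _.
Arguments Shriek {C} _ _.

Definition Ex {C} (x : nat) (p : QF C) : QF C := Neg (Shriek x (Neg p)).
Definition Tensor {C} (p q : QF C) : QF C := Neg (Lolli p (Neg q)).
Definition Conj {C} (p q : QF C) : QF C := Neg (Imp p (Neg q)).
Definition Iff {C} (p q : QF C) : QF C := Conj (Imp p q) (Imp q p).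

(* assignments are total maps from variables (nat) to the domain;
   a team is an arbitrary set of assignments *)
Definition upd {A : Type} (s : nat -> A) (x : nat) (a : A) : nat -> A :=
  fun y => if Nat.eqb y x then a else s y.

Section TeamSem.
Variables (A C : Type) (csat : C -> (nat -> A) -> Prop).

Fixpoint tsat (p : QF C) : ((nat -> A) -> Prop) -> Prop :=
  match p with
  | Cl a => fun T => forall s, T s -> csat a s        (* flatness *)
  | Neg q => fun T => ~ tsat q T
  | Imp q r => fun T => tsat q T -> tsat r T
  | Lolli q r => fun T =>
      forall S U : (nat -> A) -> Prop,
        (forall s, T s <-> S s \/ U s) -> tsat q S -> tsat r U
  | All x q => fun T =>
      tsat q (fun s' => exists s a, T s /\ s' = upd s x a)
  | Shriek x q => fun T =>
      forall f : (nat -> A) -> A -> Prop,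
        (forall s, T s -> exists a, f s a) ->
        tsat q (fun s' => exists s a, T s /\ f s a /\ s' = upd s x a)
  end.

Definition tvalid (p : QF C) : Prop := forall T, tsat p T.
End TeamSem.

Inductive QAxiom {C : Type} (cneg : C -> C) (cforall : nat -> C -> C) : QF C -> Prop :=
| Ax_LinAll : forall x p, QAxiom cneg cforall (Iff (All x (Neg p)) (Neg (All x p)))
| Ax_FEx : forall x a,
    QAxiom cneg cforall (Iff (Ex x (Cl a)) (Cl (cneg (cforall x (cneg a)))))
| Ax_DExTensor : forall x p q,
    QAxiom cneg cforall (Iff (Ex x (Tensor p q)) (Tensor (Ex x p) (Ex x q)))
| Ax_EAll : forall x a, QAxiom cneg cforall (Imp (All x (Cl a)) (Shriek x (Cl a)))
| Ax_IAll : forall x q, QAxiom cneg cforall (Imp (Shriek x q) (All x q))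
| Ax_DisAll : forall x p q,
    QAxiom cneg cforall (Imp (All x (Imp p q)) (Imp (All x p) (All x q)))
| Ax_DisShriek : forall x p q,
    QAxiom cneg cforall (Imp (Shriek x (Imp p q)) (Imp (Shriek x p) (Shriek x q))).

Record signature := { rsym : Type; fsym : Type }.

Inductive term (F : Type) : Type :=
| TVar : nat -> term F
| TApp : F -> list (term F) -> term F.
Arguments TVar {F} _.
Arguments TApp {F} _ _.

Inductive fo (S : signature) : Type :=
| FEq  : term (fsym S) -> term (fsym S) -> fo S
| FRel : rsym S -> list (term (fsym S)) -> fo S
| FNot : fo S -> fo S
| FAnd : fo S -> fo S -> fo S
| FAll : nat -> fo S -> fo S.
Arguments FEq {S} _ _.
Arguments FRel {S} _ _.
Arguments FAnd {S} _ _.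
Arguments FNot {S} _.
Arguments FAll {S} _ _.

(* a structure: nonempty domain, relations and functions interpreted on
   argument lists (any arity) *)
Record structure (S : signature) := {
  dom : Type;
  dom_inh : inhabited dom;
  rint : rsym S -> list dom -> Prop;
  fint : fsym S -> list dom -> dom }.

Section FOsem.
Variables (S : signature) (M : structure S).

Fixpoint teval (s : nat -> dom M) (t : term (fsym S)) : dom M :=
  match t with
  | TVar n => s n
  | TApp f ts => fint M f (map (teval s) ts)
  end.

Fixpoint fosat (a : fo S) (s : nat -> dom M) : Prop :=
  match a with
  | FEq t u => teval s t = teval s u
  | FRel r ts => rint M r (map (teval s) ts)
  | FNot b => ~ fosat b s
  | FAnd b c => fosat b s /\ fosat c s
  | FAll x b => forall d : dom M, fosat b (upd s x d)
  end.
End FOsem.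

Inductive qbf : Type :=
| QVar : nat -> qbf
| QNot : qbf -> qbf
| QAnd : qbf -> qbf -> qbf
| QAll : nat -> qbf -> qbf.

Fixpoint qbfsat (a : qbf) (s : nat -> bool) : Prop :=
  match a with
  | QVar n => s n = true
  | QNot b => ~ qbfsat b s
  | QAnd b c => qbfsat b s /\ qbfsat c s
  | QAll x b => forall d : bool, qbfsat b (upd s x d)
  end.

Definition FOvalid (S : signature) (p : QF (fo S)) : Prop :=
  forall M : structure S, tvalid (@fosat S M) p.

Definition QBFvalid (p : QF qbf) : Prop := tvalid qbfsat p.

(** The axioms of Q hold in every team of every model of any base logic
    whose negation and universal quantifier are classical, provided the
    domain is nonempty; FO and QBF are two instances.  Everything except
    (D∃⊗) unfolds to propositional logic, flatness of classical formulas,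
    or the fact that the supplementing function [fun _ _ => True] yields
    the duplicating team.  For (D∃⊗), a supplementing function whose
    supplemented team splits as [S' ∪ U'] induces a split of the team
    itself (keep [s] on the side where some of its values lands), and
    conversely two supplementing functions on the parts of a split glue
    to a single one on the whole team. *)

From Stdlib Require Import Classical FunctionalExtensionality PropExtensionality.

Section TeamSoundness.
Variables (A C : Type) (csat : C -> (nat -> A) -> Prop).

Definition team := (nat -> A) -> Prop.

Definition supplementing (T : team) (f : (nat -> A) -> A -> Prop) : Prop :=
  forall s, T s -> exists a, f s a.

Definition supplemented (T : team) (x : nat) (f : (nat -> A) -> A -> Prop) : team :=
  fun s' => exists s a, T s /\ f s a /\ s' = upd s x a.

Definition duplicated (T : team) (x : nat) : team :=
  fun s' => exists s a, T s /\ s' = upd s x a.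

Definition splits (T S U : team) : Prop := forall s, T s <-> S s \/ U s.

Lemma team_ext (T T' : team) : (forall s, T s <-> T' s) -> T = T'.
Proof.
  intros H; apply functional_extensionality; intros s.
  apply propositional_extensionality; auto.
Qed.

Lemma tsat_Iff p q T :
  tsat csat (Iff p q) T <-> (tsat csat p T <-> tsat csat q T).
Proof. simpl; tauto. Qed.

Lemma tsat_Ex x p T :
  tsat csat (Ex x p) T <->
  exists f, supplementing T f /\ tsat csat p (supplemented T x f).
Proof.
  simpl; split.
  - intros H; apply NNPP; intros N; apply H; intros f Hf Hp.
    apply N; exists f; auto.
  - intros [f [Hf Hp]] H; exact (H f Hf Hp).
Qed.

Lemma tsat_Tensor p q T :
  tsat csat (Tensor p q) T <->
  exists S U, splits T S U /\ tsat csat p S /\ tsat csat q U.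
Proof.
  simpl; split.
  - intros H; apply NNPP; intros N; apply H; intros S U Hsplit HS HU.
    apply N; exists S, U; auto.
  - intros [S [U [Hsplit [HS HU]]]] H; exact (H S U Hsplit HS HU).
Qed.

Lemma supplemented_restrict T x f (S' : team) :
  (forall s', S' s' -> supplemented T x f s') ->
  S' = supplemented (fun s => T s /\ exists a, f s a /\ S' (upd s x a)) x
                    (fun s a => f s a /\ S' (upd s x a)).
Proof.
  intros Hsub; apply team_ext; intros s'; split.
  - intros HS'.
    destruct (Hsub s' HS') as [s [a [Ts [Hf ->]]]].
    exists s, a; repeat split; eauto.
  - intros [s [a [_ [[_ HS'] ->]]]]; exact HS'.
Qed.

Lemma split_supplemented {T x f S' U'} :
  supplementing T f -> splits (supplemented T x f) S' U' ->
  exists S U, splits T S U /\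
    S' = supplemented S x (fun s a => f s a /\ S' (upd s x a)) /\
    U' = supplemented U x (fun s a => f s a /\ U' (upd s x a)) /\
    supplementing S (fun s a => f s a /\ S' (upd s x a)) /\
    supplementing U (fun s a => f s a /\ U' (upd s x a)).
Proof.
  intros Hf Hsplit.
  exists (fun s => T s /\ exists a, f s a /\ S' (upd s x a)),
         (fun s => T s /\ exists a, f s a /\ U' (upd s x a)).
  repeat split.
  - intros Ts; destruct (Hf s Ts) as [a Ha].
    assert (Hsa : S' (upd s x a) \/ U' (upd s x a))
      by (apply Hsplit; exists s, a; auto).
    destruct Hsa; [left | right]; eauto.
  - intros [[Ts _] | [Ts _]]; exact Ts.
  - apply supplemented_restrict; intros s' Hs'; apply Hsplit; auto.
  - apply supplemented_restrict; intros s' Hs'; apply Hsplit; auto.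
  - intros s [_ [a Ha]]; eauto.
  - intros s [_ [a Ha]]; eauto.
Qed.

Lemma supplemented_glue {S U f g} x :
  supplementing S f -> supplementing U g ->
  let h := fun s a => (S s /\ f s a) \/ (U s /\ g s a) in
  supplementing (fun s => S s \/ U s) h /\
  splits (supplemented (fun s => S s \/ U s) x h)
         (supplemented S x f) (supplemented U x g).
Proof.
  intros Hf Hg h; split.
  - intros s [Ss | Us];
      [destruct (Hf s Ss) as [a Ha] | destruct (Hg s Us) as [a Ha]];
      exists a; unfold h; auto.
  - intros s'; split.
    + intros [s [a [_ [[[Ss Ha] | [Us Ha]] ->]]]]; [left | right];
        exists s, a; auto.
    + intros [[s [a [Ss [Ha ->]]]] | [s [a [Us [Ha ->]]]]];
        exists s, a; unfold h; auto.
Qed.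

Lemma tsat_Ex_Tensor x p q T :
  tsat csat (Iff (Ex x (Tensor p q)) (Tensor (Ex x p) (Ex x q))) T.
Proof.
  apply tsat_Iff; rewrite tsat_Ex, tsat_Tensor; split.
  - intros [f [Hf Hpq]].
    apply tsat_Tensor in Hpq; destruct Hpq as [S' [U' [Hsplit [HS' HU']]]].
    destruct (split_supplemented Hf Hsplit)
      as [S [U [HTsplit [ES [EU [HfS HfU]]]]]].
    exists S, U; split; [exact HTsplit |].
    rewrite !tsat_Ex; split; [rewrite ES in HS' | rewrite EU in HU']; eauto.
  - intros [S [U [Hsplit [HS HU]]]].
    rewrite tsat_Ex in HS, HU.
    destruct HS as [f [Hf Hp]], HU as [g [Hg Hq]].
    destruct (supplemented_glue x Hf Hg) as [Hh Hhsplit].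
    replace T with (fun s => S s \/ U s) by (symmetry; apply team_ext; exact Hsplit).
    eexists; split; [exact Hh |].
    apply tsat_Tensor; eauto.
Qed.

Lemma supplemented_True_duplicated T x :
  supplemented T x (fun _ _ => True) = duplicated T x.
Proof.
  apply team_ext; intros s'; split; intros [s [a H]]; exists s, a; tauto.
Qed.

Lemma tsat_Shriek_All x q T :
  inhabited A -> tsat csat (Imp (Shriek x q) (All x q)) T.
Proof.
  intros [a0] H; change (tsat csat q (duplicated T x)).
  rewrite <- supplemented_True_duplicated.
  apply H; exists a0; exact I.
Qed.

(* Flatness: the supplemented team is a subteam of the duplicated one. *)
Lemma tsat_All_Shriek_Cl x a T :
  tsat csat (Imp (All x (Cl a)) (Shriek x (Cl a))) T.
Proof.
  simpl; intros H f _ s' [s [d [Ts [_ ->]]]].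
  apply H; exists s, d; auto.
Qed.

Lemma tvalid_Shriek x p : tvalid csat p -> tvalid csat (Shriek x p).
Proof. intros H T f _; apply H. Qed.

Section ClassicalBase.
Variables (cneg : C -> C) (cforall : nat -> C -> C).
Hypothesis csat_cneg : forall a s, csat (cneg a) s <-> ~ csat a s.
Hypothesis csat_cforall :
  forall x a s, csat (cforall x a) s <-> forall d, csat a (upd s x d).

Lemma csat_cexists x a s :
  csat (cneg (cforall x (cneg a))) s <-> exists d, csat a (upd s x d).
Proof.
  rewrite csat_cneg, csat_cforall; split.
  - intros H; apply NNPP; intros N; apply H; intros d.
    apply csat_cneg; intros Ha; apply N; eauto.
  - intros [d Hd] H; apply (proj1 (csat_cneg _ _) (H d)), Hd.
Qed.

Lemma tsat_Ex_Cl x a T :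
  tsat csat (Iff (Ex x (Cl a)) (Cl (cneg (cforall x (cneg a))))) T.
Proof.
  apply tsat_Iff; rewrite tsat_Ex; simpl; split.
  - intros [f [Hf Ha]] s Ts; apply csat_cexists.
    destruct (Hf s Ts) as [d Hd].
    exists d; apply Ha; exists s, d; auto.
  - intros H; exists (fun s d => csat a (upd s x d)); split.
    + intros s Ts; apply csat_cexists, H, Ts.
    + intros s' [s [d [_ [Hd ->]]]]; exact Hd.
Qed.

Theorem QAxiom_tvalid p :
  inhabited A -> QAxiom cneg cforall p -> tvalid csat p.
Proof.
  intros Hinh Hax T; destruct Hax.
  - simpl; tauto.
  - apply tsat_Ex_Cl.
  - apply tsat_Ex_Tensor.
  - apply tsat_All_Shriek_Cl.
  - apply tsat_Shriek_All, Hinh.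
  - simpl; auto.
  - simpl; intros H1 H2 f Hf; apply H1; auto.
Qed.

End ClassicalBase.
End TeamSoundness.

Theorem mainTheorem9 :
  (forall S : signature,
     (forall p : QF (fo S), QAxiom (@FNot S) (@FAll S) p -> FOvalid p) /\
     (forall (x : nat) (p : QF (fo S)), FOvalid p -> FOvalid (Shriek x p)))
  /\
  ((forall p : QF qbf, QAxiom QNot QAll p -> QBFvalid p) /\
   (forall (x : nat) (p : QF qbf), QBFvalid p -> QBFvalid (Shriek x p))).
Proof.
  split; [intros S; split | split].
  - intros p Hax M.
    apply (@QAxiom_tvalid _ _ (@fosat S M) (@FNot S) (@FAll S));
      [simpl; tauto | simpl; tauto | exact (dom_inh M) | exact Hax].
  - intros x p Hp M; apply tvalid_Shriek, Hp.
  - intros p Hax.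
    apply (@QAxiom_tvalid _ _ qbfsat QNot QAll);
      [simpl; tauto | simpl; tauto | exact (inhabits true) | exact Hax].
  - intros x p Hp; apply tvalid_Shriek, Hp.
Qed.
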